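(* Let $U$ be a finite word over the alphabet $\{\mathtt{a},\mathtt{b},\mathtt{x}\}$ starting and ending with the letter $\mathtt{x}$, and let $\alpha=r(U)^{1/(|U|+5)}$. Then there exists a constant $c>0$ such that $f_4(n)\geqslant c\,\alpha^n$ for all $n\in\mathbb{N}$.
   Context: A square is a finite non-empty word of the form $XX$; a word is square-free if it has no square factor. A square reduction replaces a word $UXXV$ (with $X$ non-empty) by $UXV$. A reduct of $W$ is any square-free word obtainable from $W$ by a finite sequence of square reductions, and $r(W)$ is the number of distinct reducts of $W$. $|U|$ is the length of $U$. For integers $k,n\geqslant 1$, $f_k(n)$ is the maximum of $r(W)$ over all words $W$ of length $n$ over a $k$-letter alphabet. *)

From Stdlib Require Import Relations.
From mathcomp Require Import all_boot.
From mathcomp Require Import boolp.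

Set Implicit Arguments.
Unset Strict Implicit.
Unset Printing Implicit Defensive.

Section Words.
Variable T : eqType.

Definition squarefree (w : seq T) : Prop :=
  forall u x v : seq T, w = u ++ x ++ x ++ v -> x = [::].

Definition sq_step (w w' : seq T) : Prop :=
  exists u x v : seq T, x <> [::] /\ w = u ++ x ++ x ++ v /\ w' = u ++ x ++ v.

Definition is_reduct (W V : seq T) : Prop :=
  clos_refl_trans (seq T) sq_step W V /\ squarefree V.
End Words.

Definition words_upto (k m : nat) : seq (seq 'I_k) :=
  flatten [seq [seq tval t | t <- enum {: n.-tuple 'I_k}] | n <- iota 0 m.+1].

(* r(W): the number of distinct reducts of W.  Every reduct of W has length
   at most |W|, so counting among the words of length <= |W| counts all of
   them. *)
Definition r (k : nat) (W : seq 'I_k) : nat :=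
  count (fun V => `[< is_reduct W V >]) (words_upto k (size W)).

Definition f_k (k n : nat) : nat := \max_(W : n.-tuple 'I_k) r (tval W).

From Pilot Require Import Defs.
From Stdlib Require Import Relations Reals Lra.
From mathcomp Require Import all_boot perm zify boolp.

Set Implicit Arguments.
Unset Strict Implicit.
Unset Printing Implicit Defensive.

(* Let w be a square-free word over {a,b,x} in which x occurs at least |w|/3
   times: the first differences of the Thue-Morse word, with letters renamed so
   that x is the most frequent one.  Replace every x of w by U and follow every
   letter (or copy of U) by a fourth letter #.  Reducing each copy of U
   independently to one of its r(U) reducts gives r(U)^(|w|_x) distinct
   reducts of the resulting word W: they are square-free because each block
   is, each block starts and ends with the letter of w it replaces, and w is
   square-free.  As |W| = 2|w| + (|U|-1)|w|_x <= (|U|+5)|w|_x and padding W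
   with # keeps these reducts, f_4(n) >= r(U)^(n/(|U|+5) - 1). *)

Notation reduces := (clos_refl_trans _ (@sq_step _)).

Lemma map_eq_cat (S T : Type) (f : S -> T) w u v : map f w = u ++ v ->
  exists u' v', [/\ w = u' ++ v', map f u' = u & map f v' = v].
Proof.
move=> E; exists (take (size u) w), (drop (size u) w).
by rewrite cat_take_drop map_take map_drop E take_size_cat // drop_size_cat.
Qed.

Lemma split_first (T : eqType) (a : T) X :
  a \in X -> exists A B, X = A ++ a :: B /\ a \notin A.
Proof.
elim: X => // b X IH; rewrite inE; case: (eqVneq a b) => [<- _ | ab /IH [A [B [-> aA]]]].
  by exists [::], X.
by exists (b :: A), B; rewrite inE negb_or ab.
Qed.

Section Squarefree.
Variable T : eqType.
Implicit Types (a : T) (u v w p q X : seq T).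

Lemma cat_eq_cases u1 v1 u2 v2 : u1 ++ v1 = u2 ++ v2 ->
  (exists t, u2 = u1 ++ t /\ v1 = t ++ v2) \/ (exists t, u1 = u2 ++ t /\ v2 = t ++ v1).
Proof.
elim: u1 u2 => [|a u1 IH] [|b u2] /=.
- by left; exists [::].
- by move=> ->; left; exists (b :: u2).
- by move=> <-; right; exists (a :: u1).
- case=> -> /IH [[t [-> ->]]|[t [-> ->]]]; [left | right]; by exists t.
Qed.

Lemma squarefree1 a : squarefree [:: a].
Proof. by move=> u X v /(congr1 size); rewrite !size_cat /=; case: X => //= *; lia. Qed.

Lemma squarefree_map (T' : eqType) (f : T -> T') w :
  injective f -> squarefree w -> squarefree (map f w).
Proof.
move=> f_inj sqw u X v /map_eq_cat [u' [w1 [Ew _]]].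
case/map_eq_cat=> X1 [w2 [Ew1 EX1]] /map_eq_cat [X2 [v' [Ew2 EX2 _]]].
have EX : X1 = X2 by apply: (inj_map f_inj); rewrite EX1 EX2.
by rewrite -EX1 (sqw u' X1 v') // Ew Ew1 Ew2 EX.
Qed.

Lemma squarefree_mkseq (f : nat -> T) (N : nat) :
  (forall i k, 0 < k -> ~ (forall j, j < k -> f (i + j) = f (i + j + k))) ->
  squarefree (mkseq f N).
Proof.
move=> nosq u X v E; apply/eqP/negPn/negP; rewrite -size_eq0 -lt0n => X_gt0.
apply: (nosq (size u) (size X) X_gt0) => j jX.
have sN : size u + size X + size X + size v = N.
  by have := congr1 size E; rewrite size_mkseq !size_cat; lia.
have nth_at k : k < N -> f k = nth (f 0) (u ++ X ++ X ++ v) k.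
  by move=> kN; rewrite -E nth_mkseq.
rewrite (nth_at (size u + j)) 1?(nth_at (size u + j + size X)); try lia.
have d1 : drop (size u) (u ++ X ++ X ++ v) = X ++ X ++ v by rewrite drop_size_cat.
have d2 : drop (size u + size X) (u ++ X ++ X ++ v) = X ++ v.
  by rewrite catA drop_size_cat ?size_cat.
by rewrite addnAC -!nth_drop d1 d2 !nth_cat jX.
Qed.

Lemma sq_step_ctx p q w w' : sq_step w w' -> sq_step (p ++ w ++ q) (p ++ w' ++ q).
Proof.
by case=> u [X [v [Xn [-> ->]]]]; exists (p ++ u), X, (v ++ q); rewrite -!catA.
Qed.

Lemma reduces_ctx p q w w' : reduces w w' -> reduces (p ++ w ++ q) (p ++ w' ++ q).
Proof.
elim=> [w1 w2 st | w1 | w1 w2 w3 _ IH1 _ IH2].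
- exact/rt_step/sq_step_ctx.
- exact: rt_refl.
- exact: rt_trans IH1 IH2.
Qed.

Lemma reduces_cat u u' v v' : reduces u u' -> reduces v v' -> reduces (u ++ v) (u' ++ v').
Proof.
move=> ru rv; apply: (@rt_trans _ _ _ (u' ++ v)).
- by have := reduces_ctx [::] v ru.
- by have := reduces_ctx u' [::] rv; rewrite !cats0.
Qed.

Lemma reduces_size w w' : reduces w w' -> size w' <= size w.
Proof.
elim=> [w1 w2 [u [X [v [_ [-> ->]]]]] | // | w1 w2 w3 _ IH1 _ IH2].
- by rewrite !size_cat; lia.
- exact: leq_trans IH2 IH1.
Qed.

Lemma reduces_head_last a w w' : reduces w w' -> w <> [::] ->
  [/\ w' <> [::], head a w' = head a w & last a w' = last a w].
Proof.
elim=> [w1 w2 [u [X [v [Xn [-> ->]]]]] _ | // | w1 w2 w3 _ IH1 _ IH2 w1n].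
- case: X Xn => [//|b X] _; split; [by case: u | by case: u |].
  by case/lastP: v => [|v c]; rewrite ?cats0 -?rcons_cat ?last_rcons // !last_cat.
- have [w2n h2 l2] := IH1 w1n; have [w3n h3 l3] := IH2 w2n.
  by rewrite h3 h2 l3 l2.
Qed.

Lemma reduces_map (T' : eqType) (f : T -> T') w w' :
  reduces w w' -> reduces (map f w) (map f w').
Proof.
elim=> [w1 w2 [u [X [v [Xn [-> ->]]]]] | w1 | w1 w2 w3 _ IH1 _ IH2].
- apply: rt_step; exists (map f u), (map f X), (map f v).
  by rewrite !map_cat; split => //; case: X Xn.
- exact: rt_refl.
- exact: rt_trans IH1 IH2.
Qed.

Lemma reduces_pad w a j : reduces (rcons w a ++ nseq j a) (rcons w a).
Proof.
elim: j => [|j IH]; first by rewrite cats0; apply: rt_refl.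
apply: rt_trans IH; apply: rt_step; exists w, [:: a], (nseq j a).
by rewrite -!cats1 -!catA.
Qed.

Lemma reduct_exists w : exists w', is_reduct w w'.
Proof.
elim: {w}(size w) {-2}w (leqnn (size w)) => [|n IH] w.
  rewrite leqn0 => /nilP ->; exists [::]; split; first exact: rt_refl.
  by move=> u X v /(congr1 size); rewrite !size_cat; case: X => //= *; lia.
move=> wn; case: (pselect (exists u X v, X <> [::] /\ w = u ++ X ++ X ++ v)).
- case=> u [X [v [Xn Ew]]].
  have st : sq_step w (u ++ X ++ v) by exists u, X, v.
  have [|w' [rw' sqw']] := IH (u ++ X ++ v).
    by move: wn; rewrite Ew !size_cat; case: X Xn {Ew st} => //= *; lia.
  by exists w'; split => //; apply: rt_trans (rt_step _ _ _ _ st) rw'.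
- move=> nosq; exists w; split; first exact: rt_refl.
  move=> u X v Ew; case: (eqVneq X [::]) => // /eqP Xn.
  by case: nosq; exists u, X, v.
Qed.

End Squarefree.

Section Counting.
Variable k : nat.
Implicit Types (W V : seq 'I_k).

Lemma mem_words_upto m W : (W \in words_upto k m) = (size W <= m).
Proof.
apply/flattenP/idP => [[ws /mapP [n]] | hW].
  by rewrite mem_iota ltnS => /andP [_ hn] -> /mapP [t _ ->]; rewrite size_tuple.
exists ([seq tval t | t <- enum {: (size W).-tuple 'I_k}]).
  by apply/mapP; exists (size W); rewrite // mem_iota ltnS.
by apply/mapP; exists (in_tuple W); rewrite ?mem_enum.
Qed.

Lemma uniq_words_upto m : uniq (words_upto k m).
Proof.
have uniq_tuples n : uniq ([seq tval t | t <- enum {: n.-tuple 'I_k}]).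
  by rewrite map_inj_uniq ?enum_uniq //; apply: val_inj.
elim: m => [|m IH]; first by rewrite /words_upto /= cats0.
have -> : words_upto k m.+1 =
           words_upto k m ++ [seq tval t | t <- enum {: m.+1.-tuple 'I_k}].
  by rewrite /words_upto -addn1 iotaD map_cat flatten_cat /= cats0.
rewrite cat_uniq IH uniq_tuples andbT /=.
by apply/hasPn => _ /mapP [t _ ->]; rewrite mem_words_upto size_tuple ltnn.
Qed.

Lemma r_ge W (L : seq (seq 'I_k)) :
  uniq L -> (forall V, V \in L -> is_reduct W V) -> size L <= r W.
Proof.
move=> uL HL; rewrite /r -size_filter; apply: uniq_leq_size => // V VL.
have [rV sqV] := HL V VL.
by rewrite mem_filter mem_words_upto (reduces_size rV) andbT; apply/asboolP.
Qed.

Lemma r_gt0 W : 0 < r W.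
Proof.
by have [V RV] := reduct_exists W; apply: (@r_ge W [:: V]) => // _ /[1!inE] /eqP ->.
Qed.

Lemma r_reduces W W' : reduces W W' -> r W' <= r W.
Proof.
move=> rW; rewrite {1}/r -size_filter; apply: r_ge; first exact/filter_uniq/uniq_words_upto.
move=> V; rewrite mem_filter => /andP [/asboolP [rV sqV] _].
by split; first exact: rt_trans rW rV.
Qed.

End Counting.

Lemma r_le_f_k k (W : seq 'I_k.+1) n : size W <= n -> r W <= f_k k.+1 n.
Proof.
have r_le_f (t : seq 'I_k.+1) (st : size t == n) : r t <= f_k k.+1 n.
  exact: (@leq_bigmax _ (fun t : n.-tuple 'I_k.+1 => r (tval t)) (Tuple st)).
case/lastP: W => [|W a] hn.
- have r_nil : r (k := k.+1) [::] <= 1.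
    apply: leq_trans (count_size _ _) _.
    by rewrite /words_upto /= cats0 size_map -cardE card_tuple.
  apply: leq_trans r_nil (leq_trans (r_gt0 (nseq n ord0)) (r_le_f _ _)).
  by rewrite size_nseq.
- apply: leq_trans (r_reduces (reduces_pad W a (n - size (rcons W a)))) (r_le_f _ _).
  by rewrite size_cat size_nseq subnKC.
Qed.

Section JoinSep.
Variables (T : eqType) (y : T).
Implicit Types (a : T) (u v p q s t A B C X : seq T) (l m : seq (seq T)).

Definition join_sep l := flatten [seq rcons s y | s <- l].
Definition sepfree l := all (fun s => y \notin s) l.

Lemma join_sep_cons s l : join_sep (s :: l) = s ++ y :: join_sep l.
Proof. by rewrite /join_sep /= cat_rcons. Qed.

Lemma last_join_sep a l : l <> [::] -> last a (join_sep l) = y.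
Proof.
case/lastP: l => // l s _.
by rewrite /join_sep map_rcons -cats1 flatten_cat /= cats0 last_cat last_rcons.
Qed.

Lemma sep_cancel p q p' q' : y \notin p -> y \notin p' ->
  p ++ y :: q = p' ++ y :: q' -> p = p' /\ q = q'.
Proof.
elim: p p' => [|b p IH] [|b' p'] //=; rewrite ?inE.
- by move=> _ _ [->].
- by move=> _ /norP [yb' _] [Eb]; rewrite Eb eqxx in yb'.
- by move=> /norP [yb _] _ [Eb]; rewrite Eb eqxx in yb.
- by move=> /norP [_ yp] /norP [_ yp'] [-> /(IH _ yp yp') [-> ->]].
Qed.

Lemma join_sep_split l p q : sepfree l -> join_sep l = p ++ y :: q ->
  exists l1 s l2, [/\ l = l1 ++ s :: l2, p = join_sep l1 ++ s & q = join_sep l2].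
Proof.
elim: l p => [|s0 l IH] p /=; first by case: p.
case/andP=> ys0 yl; rewrite join_sep_cons.
case: (boolP (y \in p)) => [/split_first [p1 [p2 [-> yp1]]] | yp].
  rewrite -catA /= => /(sep_cancel ys0 yp1) [<- /(IH _ yl) [l1 [s [l2 [-> -> ->]]]]].
  by exists (s0 :: l1), s, l2; rewrite join_sep_cons -catA.
by move=> /(sep_cancel ys0 yp) [<- <-]; exists [::], s0, l.
Qed.

Lemma join_sep_prefix l m t : sepfree l -> sepfree m ->
  join_sep m = join_sep l ++ t -> exists m', m = l ++ m' /\ join_sep m' = t.
Proof.
elim: l m => [|a l IH] [|b m] //=.
- by move=> _ _ <-; exists [::].
- by exists (b :: m).
- by move=> _ _; rewrite join_sep_cons; case: a.
- case/andP=> ya yl /andP [yb ym]; rewrite !join_sep_cons -catA /=.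
  by case/(sep_cancel yb ya) => -> /(IH _ yl ym) [m' [-> <-]]; exists m'.
Qed.

Lemma join_sep_inj l m : sepfree l -> sepfree m -> join_sep l = join_sep m -> l = m.
Proof.
move=> yl ym E; have E' : join_sep m = join_sep l ++ [::] by rewrite E cats0.
have [[|s m'] [-> //]] := join_sep_prefix yl ym E'; first by rewrite cats0.
by rewrite join_sep_cons; case: s.
Qed.

Lemma join_sep_factor l u Z v : sepfree l -> Z <> [::] -> y \notin Z ->
  join_sep l = u ++ Z ++ v -> exists2 s, s \in l & exists u' v', s = u' ++ Z ++ v'.
Proof.
move=> + Zn yZ; elim: l u => [|s0 l IH] u /=.
  by move=> _ /(congr1 size); rewrite !size_cat; case: Z Zn {yZ} => //= *; lia.
case/andP=> ys0 yl; rewrite join_sep_cons => E.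
case: (boolP (y \in u)) => [/split_first [u1 [u2 [Eu yu1]]] | yu].
  move: E; rewrite Eu -catA /= => /(sep_cancel ys0 yu1) [_ /(IH _ yl) [s sl Hs]].
  by exists s; rewrite // inE sl orbT.
have : y \in u ++ Z ++ v by rewrite -E mem_cat inE eqxx orbT.
rewrite !mem_cat (negbTE yu) (negbTE yZ) /= => /split_first [v1 [v2 [Ev yv1]]].
have yuZv1 : y \notin u ++ Z ++ v1 by rewrite !mem_cat !negb_or yu yZ.
have {}Ev : u ++ Z ++ v = (u ++ Z ++ v1) ++ y :: v2 by rewrite Ev -!catA.
have [-> _] := sep_cancel ys0 yuZv1 (etrans E Ev).
by exists (u ++ Z ++ v1); [rewrite inE eqxx | exists u, v1; rewrite catA].
Qed.

Lemma join_sep_suffix l s u A : y \notin A ->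
  join_sep l ++ s = u ++ A -> exists t, s = t ++ A /\ u = join_sep l ++ t.
Proof.
move=> yA /cat_eq_cases [[t [-> ->]] | [[|b t] [El EA]]]; first by exists t.
  by exists [::]; rewrite El EA !cats0.
have ln : l <> [::] by move=> l0; move: El; rewrite l0; case: u.
have yt : y \in b :: t by rewrite -(last_join_sep b ln) El last_cat /= mem_last.
by move: yA; rewrite EA mem_cat yt.
Qed.

Lemma join_sep_head l C v : C <> [::] -> y \notin C ->
  join_sep l = C ++ v -> exists s l', l = s :: l' /\ head y s = head y C.
Proof.
case: C => // c C _; rewrite inE negb_or => /andP [yc _].
case: l => [|[|b s] l] //; rewrite join_sep_cons /=.
  by case=> ey; rewrite ey eqxx in yc.
by case=> -> _; exists (c :: s), l.
Qed.

Lemma join_sep_square_align l u A B v : sepfree l -> y \notin A ->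
  join_sep l = u ++ (A ++ y :: B) ++ (A ++ y :: B) ++ v ->
  exists l1 m1 m3 s s' t C, [/\ l = l1 ++ s :: m1 ++ s' :: m1 ++ m3,
    s = t ++ A, s' = C ++ A & join_sep m3 = C ++ v].
Proof.
move=> yl yA E.
have {E} : join_sep l = (u ++ A) ++ y :: ((B ++ A) ++ y :: (B ++ v)).
  by rewrite E -!catA.
case/(join_sep_split yl) => l1 [s [l2 [El /esym/(join_sep_suffix yA) [t [Es _]] E2]]].
have yl2 : sepfree l2 by move: yl; rewrite El /sepfree all_cat /= => /and3P [].
case/esym/(join_sep_split yl2): E2 => m1 [s' [m2 [El2 E3 E4]]].
have [C [Es' EB]] := join_sep_suffix yA (esym E3).
have [ym1 ym2] : sepfree m1 /\ sepfree m2.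
  by move: yl2; rewrite El2 /sepfree all_cat /= => /and3P [].
move: E4; rewrite EB -catA => /esym /(join_sep_prefix ym1 ym2) [m3 [Em2 Em3]].
by exists l1, m1, m3, s, s', t, C; rewrite El El2 Em2.
Qed.

(* A square with no # lies inside one block; a square with # in its period is
   aligned with the blocks, and then the first letters of the blocks (which are
   also their last letters) contain a square. *)
Lemma join_sep_squarefree l : sepfree l ->
  (forall s, s \in l -> [/\ s <> [::], head y s = last y s & squarefree s]) ->
  squarefree (map (head y) l) -> squarefree (join_sep l).
Proof.
move=> yl blocks sqh u X v E; apply/eqP/negPn/negP => /eqP Xn.
case: (boolP (y \in X)) => yX; last first.
  have XXn : X ++ X <> [::] by case: X Xn {E yX}.
  have yXX : y \notin X ++ X by rewrite mem_cat negb_or yX.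
  have E' : join_sep l = u ++ (X ++ X) ++ v by rewrite E -catA.
  have [s sl [u' [v' Es]]] := join_sep_factor yl XXn yXX E'.
  by have [_ _ /(_ u' X v')] := blocks s sl; rewrite Es -catA => /(_ erefl).
have [A [B [EX yA]]] := split_first yX; rewrite EX in E.
have [l1 [m1 [m3 [s [s' [t [C [El Es Es' Em3]]]]]]]] := join_sep_square_align yl yA E.
have sl : s \in l by rewrite El mem_cat mem_head orbT.
have s'l : s' \in l by rewrite El !(mem_cat, inE) eqxx !orbT.
have [s'n hs' _] := blocks s' s'l; have [_ hs _] := blocks s sl.
have Eh : map (head y) l = map (head y) l1 ++ head y s :: map (head y) m1 ++
                           head y s' :: map (head y) m1 ++ map (head y) m3.
  by rewrite El !(map_cat, map_cons).
case: (eqVneq A [::]) => [A0 | /eqP An].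
- rewrite A0 cats0 in Es'; rewrite -Es' in Em3.
  have [s'' [m4 [Em3' hs'']]] := join_sep_head s'n (allP yl s' s'l) Em3.
  have := sqh (map (head y) l1 ++ [:: head y s]) (map (head y) m1 ++ [:: head y s'])
              (map (head y) m4).
  rewrite Eh Em3' /= hs'' -!catA /= => /(_ erefl).
  by case: (map (head y) m1).
- have Ehs : head y s = head y s'.
    by rewrite hs hs' Es Es' !last_cat; case: (A) An.
  have := sqh (map (head y) l1) (head y s :: map (head y) m1) (map (head y) m3).
  by rewrite Eh Ehs /= => /(_ erefl).
Qed.

End JoinSep.

Arguments join_sep : simpl never.

Section Choices.
Variables (A T : eqType) (y : T) (img : A -> T).
Variables (base : A -> seq T) (blocks : A -> seq (seq T)).
Hypothesis img_neq_sep : forall a, img a != y.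
Hypothesis blocksP : forall a V, V \in blocks a ->
  [/\ y \notin V, head y V = img a, last y V = img a, squarefree V & reduces (base a) V].

Fixpoint choices (l : seq A) : seq (seq (seq T)) :=
  if l is a :: l' then [seq V :: L | V <- blocks a, L <- choices l'] else [:: [::]].

Lemma size_choices l : size (choices l) = \prod_(a <- l) size (blocks a).
Proof. by elim: l => [|a l IH]; rewrite ?big_nil ?big_cons //= size_allpairs IH. Qed.

Lemma uniq_choices l : (forall a, uniq (blocks a)) -> uniq (choices l).
Proof.
move=> ub; elim: l => //= a l IH.
by apply: allpairs_uniq => // [[V L]] [V' L'] _ _ [-> ->].
Qed.

Lemma choicesP l L : L \in choices l ->
  [/\ map (head y) L = map img l, sepfree y L,
      forall s, s \in L -> [/\ s <> [::], head y s = last y s & squarefree s]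
    & reduces (join_sep y (map base l)) (join_sep y L)].
Proof.
elim: l L => [|a l IH] L /=; first by rewrite inE => /eqP ->; split => //; apply: rt_refl.
case/allpairsP => [[V L']] [/= /blocksP [yV hV lV sqV rV] /IH [hL' yL' bL' rL'] ->].
have Vn : V <> [::] by move=> V0; move: (img_neq_sep a); rewrite -hV V0 eqxx.
split => /=; first by rewrite hV hL'.
- by rewrite yV.
- by move=> s; rewrite inE => /predU1P [-> | /bL' //]; rewrite hV lV.
- by rewrite !join_sep_cons; apply: reduces_cat rV (reduces_cat (rt_refl _ _ [:: y]) rL').
Qed.

Lemma reduct_join_sep_choices l L : squarefree (map img l) -> L \in choices l ->
  is_reduct (join_sep y (map base l)) (join_sep y L).
Proof.
move=> sqi /choicesP [hL yL bL rL]; split => //.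
by apply: join_sep_squarefree => //; rewrite hL.
Qed.

Lemma uniq_join_sep_choices l : (forall a, uniq (blocks a)) ->
  uniq (map (join_sep y) (choices l)).
Proof.
move=> ub; rewrite map_inj_in_uniq ?uniq_choices // => L L' /choicesP [_ yL _ _].
by move=> /choicesP [_ yL' _ _]; apply: join_sep_inj.
Qed.

End Choices.

Section Substitution.
Variables (x : 'I_3) (U : seq 'I_3).
Hypotheses (U_neq0 : U <> [::]) (head_U : head x U = x) (last_U : last x U = x).

Definition widen3 : 'I_3 -> 'I_4 := widen_ord (leqnSn 3).
Definition sep4 : 'I_4 := ord_max.

Lemma widen3_inj : injective widen3.
Proof. by move=> a b /(congr1 val) /= /val_inj. Qed.

Lemma widen3_neq_sep a : widen3 a != sep4.
Proof. by rewrite -(inj_eq val_inj) /= neq_ltn ltn_ord. Qed.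

Definition reducts_U := [seq V <- words_upto 3 (size U) | `[< is_reduct U V >]].

Definition subst_base (a : 'I_3) := if a == x then map widen3 U else [:: widen3 a].

Definition subst_blocks (a : 'I_3) :=
  if a == x then map (map widen3) reducts_U else [:: [:: widen3 a]].

Lemma subst_blocksP a V : V \in subst_blocks a ->
  [/\ sep4 \notin V, head sep4 V = widen3 a, last sep4 V = widen3 a, squarefree V
    & reduces (subst_base a) V].
Proof.
rewrite /subst_blocks /subst_base; case: eqP => [-> | _]; last first.
  rewrite inE => /eqP ->; split=> //; last exact: rt_refl.
  - by rewrite inE eq_sym widen3_neq_sep.
  - exact: squarefree1.
case/mapP=> V0; rewrite mem_filter => /andP [/asboolP [rV0 sqV0] _] ->.
have [V0n] := reduces_head_last x rV0 U_neq0; rewrite head_U last_U => hV0 lV0.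
split; last exact: reduces_map.
- by apply/mapP=> -[b _ /eqP]; rewrite eq_sym (negbTE (widen3_neq_sep b)).
- by case: V0 V0n hV0 {rV0 sqV0 lV0} => //= b V0 _ ->.
- case/lastP: V0 V0n lV0 {rV0 sqV0 hV0} => //= V0 b _.
  by rewrite map_rcons !last_rcons => ->.
- exact: squarefree_map widen3_inj sqV0.
Qed.

Lemma uniq_subst_blocks a : uniq (subst_blocks a).
Proof.
rewrite /subst_blocks; case: eqP => // _.
by rewrite map_inj_uniq ?filter_uniq ?uniq_words_upto //; apply/inj_map/widen3_inj.
Qed.

Lemma prod_size_subst_blocks w :
  \prod_(a <- w) size (subst_blocks a) = r U ^ count_mem x w.
Proof.
elim: w => [|a w IH]; rewrite ?big_nil ?big_cons //= IH /subst_blocks.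
by case: eqP => _; rewrite ?size_map ?size_filter ?expnS //= mul1n.
Qed.

Lemma size_subst w :
  size (join_sep sep4 (map subst_base w)) = 2 * size w + (size U).-1 * count_mem x w.
Proof.
have U_gt0 : 0 < size U by case: U U_neq0.
elim: w => [|a w IH]; first by rewrite !muln0.
rewrite /= join_sep_cons size_cat /= IH /subst_base.
by case: eqP => _ /=; rewrite ?size_map; lia.
Qed.

Lemma r_subst_ge w :
  squarefree w -> r U ^ count_mem x w <= r (join_sep sep4 (map subst_base w)).
Proof.
move=> sqw; rewrite -prod_size_subst_blocks -size_choices -(size_map (join_sep sep4)).
apply: r_ge => [|_ /mapP [L Lw ->]].
  exact: uniq_join_sep_choices widen3_neq_sep subst_blocksP _ uniq_subst_blocks.
apply: reduct_join_sep_choices widen3_neq_sep subst_blocksP _ _ _ Lw.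
exact: squarefree_map widen3_inj sqw.
Qed.

End Substitution.

Fixpoint odd_ones (p : positive) : bool :=
  match p with xH => true | xO p => odd_ones p | xI p => ~~ odd_ones p end.

Definition tm (n : nat) : bool := if bin_of_nat n is Npos p then odd_ones p else false.

Lemma tm_double_add m (b : bool) : tm (m.*2 + b) = tm m (+) b.
Proof.
rewrite -[m]bin_of_natK; case: (bin_of_nat m) => [|p] /=.
  by case: b.
have -> : (nat_of_pos p).*2 + b = nat_of_bin (Npos (if b then xI p else xO p)).
  by case: b; rewrite /= NatTrec.doubleE ?addn0 ?addn1.
rewrite /tm -[nat_of_pos p]/(nat_of_bin (Npos p)) !nat_of_binK.
by case: b; rewrite /= ?addbT ?addbF.
Qed.

Lemma tm_double m : tm m.*2 = tm m.
Proof. by have := tm_double_add m false; rewrite addn0 addbF. Qed.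

Lemma tm_doubleS m : tm m.*2.+1 = ~~ tm m.
Proof. by have := tm_double_add m true; rewrite addn1 addbT. Qed.

Lemma tm_eq_succ_odd n : tm n = tm n.+1 -> odd n.
Proof.
case/boolP: (odd n) => // /negbTE en.
by rewrite -[n]odd_double_half en add0n tm_double tm_doubleS; case: (tm _).
Qed.

Lemma tm_no_cube n : tm n = tm n.+1 -> tm n.+1 = tm n.+2 -> False.
Proof. by move=> /tm_eq_succ_odd on /tm_eq_succ_odd /=; rewrite on. Qed.

Definition tm_overlap i p := forall j, j <= p -> tm (i + j) = tm (i + j + p).

Lemma tm_no_alternation i : ~ (forall j, j < 4 -> tm (i + j) != tm (i + j).+1).
Proof.
move=> alt; set m := i./2.
have hm : i <= m.*2.+1 <= i.+1.
  by rewrite /m; have := odd_double_half i; case: (odd i) => /=; lia.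
have alt' k : i <= k <= i + 3 -> tm k != tm k.+1.
  by move=> hk; have := alt (k - i); rewrite subnKC; [apply; lia | lia].
have := alt' m.*2.+1; have := alt' (m.+1).*2.+1.
rewrite -!doubleS !tm_doubleS !tm_double doubleS.
move=> /(_ ltac:(lia)) a2 /(_ ltac:(lia)) a1.
by apply: (@tm_no_cube m); apply/eqP; [move: a1 | move: a2]; case: (tm _); case: (tm _).
Qed.

Lemma tm_overlap_half i p : tm_overlap i p.*2 -> tm_overlap i./2 p.
Proof.
move=> ov j jp; have := ov j.*2; rewrite leq_double => /(_ jp).
have -> : i + j.*2 = (i./2 + j).*2 + odd i.
  by rewrite doubleD; have := odd_double_half i; lia.
have -> : (i./2 + j).*2 + odd i + p.*2 = (i./2 + j + p).*2 + odd i by rewrite !doubleD; lia.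
by rewrite !tm_double_add; case: (odd i) (tm _) (tm _) => [] [] [].
Qed.

(* An overlap of odd period p forces tm to alternate on [i, i + 2p]. *)
Lemma tm_overlap_odd i p : odd p -> ~ tm_overlap i p.
Proof.
move=> op ov.
have shift j : j < p ->
    (tm (i + j) == tm (i + j).+1) = (tm (i + j + p) == tm (i + j + p).+1).
  by move=> jp; rewrite (ov j (ltnW jp)) -addnS (ov j.+1 jp) addnS addSn.
have alt j : j < p -> tm (i + j) != tm (i + j).+1.
  move=> jp; apply/negP => /eqP e; move/eqP: (e); rewrite shift // => /eqP e'.
  by have := tm_eq_succ_odd e'; rewrite oddD (tm_eq_succ_odd e) op.
have alt2 j : j < p.*2 -> tm (i + j) != tm (i + j).+1.
  move=> jp2; case: (ltnP j p) => [/alt // | pj].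
  have := alt (j - p) ltac:(lia); rewrite shift; last lia.
  by rewrite -addnA subnK.
case: (ltnP p 3) => [p_lt3 | p_ge3].
  have p1 : p = 1 by move: op p_lt3; case: p {ov shift alt alt2} => [|[|[]]].
  have := ov 0; have := ov 1; rewrite p1 !addn0 !addn1 => /(_ erefl) h1 /(_ erefl).
  by move/tm_no_cube; apply.
by apply: (@tm_no_alternation i) => j j4; apply: alt2; lia.
Qed.

Lemma tm_overlap_free i p : 0 < p -> ~ tm_overlap i p.
Proof.
elim/ltn_ind: p i => p IH i p_gt0.
case/boolP: (odd p) => [op | ep]; first exact: tm_overlap_odd.
have Ep : p = (p./2).*2 by rewrite -[p in LHS]odd_double_half (negbTE ep).
rewrite Ep => /tm_overlap_half; apply: IH; lia.
Qed.

(* [vtm n] is t(n+1) - t(n) + 1, where t = [tm] is the Thue-Morse sequence. *)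
Definition vtm n : 'I_3 := inord (tm n.+1 + ~~ tm n).

Lemma vtm_eq a b : vtm a = vtm b ->
  if tm a == tm b then tm a.+1 == tm b.+1 else (tm a.+1 == tm a) && (tm b.+1 == tm b).
Proof.
have bound n : tm n.+1 + ~~ tm n < 3 by case: (tm n.+1) (tm n) => [] [].
rewrite /vtm => /(congr1 val); rewrite /= !inordK //.
by case: (tm a) (tm a.+1) (tm b) (tm b.+1) => [] [] [] [].
Qed.

(* Along a square of vtm, [tm (i + j) == tm (i + j + p)] keeps its value: if it
   is true we get an overlap of tm, otherwise tm is constant on [i, i + p]. *)
Lemma vtm_no_square i p : 0 < p -> ~ (forall j, j < p -> vtm (i + j) = vtm (i + j + p)).
Proof.
move=> p_gt0 sq; have shiftS j : (i + j + p).+1 = i + j.+1 + p by rewrite addnS addSn.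
case: (eqVneq (tm i) (tm (i + p))) => [e | ne].
  apply: (@tm_overlap_free i p p_gt0); elim=> [|j IH] jp; first by rewrite !addn0.
  have := vtm_eq (sq j jp); rewrite (IH (ltnW jp)) eqxx => /eqP.
  by rewrite shiftS addnS.
have inv j : j <= p -> tm (i + j) = tm i /\ tm (i + j) != tm (i + j + p).
  elim: j => [|j IH] jp; first by rewrite !addn0.
  have [e1 n1] := IH (ltnW jp).
  have := vtm_eq (sq j jp); rewrite (negbTE n1) => /andP [/eqP e2 /eqP e3].
  by rewrite -shiftS addnS e2 e3.
by have [e _] := inv p (leqnn p); rewrite e eqxx in ne.
Qed.

Lemma sum_count_mem (T : finType) (s : seq T) : \sum_(a : T) count_mem a s = size s.
Proof.
elim: s => [|x s IH] /=; first by rewrite big1.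
rewrite big_split /= IH (bigD1 x) //= eqxx big1 // => a.
by rewrite eq_sym => /negbTE ->.
Qed.

Definition vtm_count (a : 'I_3) N := count_mem a (mkseq vtm N).
Definition vtm_maxcount N := \max_(a : 'I_3) vtm_count a N.

Lemma vtm_count_succ a N : vtm_count a N.+1 = vtm_count a N + (vtm N == a).
Proof. by rewrite /vtm_count mkseqS -cats1 count_cat /= addn0. Qed.

Lemma vtm_maxcount0 : vtm_maxcount 0 = 0.
Proof. by rewrite /vtm_maxcount big1. Qed.

Lemma vtm_maxcount_succ N : vtm_maxcount N <= vtm_maxcount N.+1 <= (vtm_maxcount N).+1.
Proof.
apply/andP; split; apply/bigmax_leqP => a _.
  by apply: leq_trans (leq_bigmax a); rewrite vtm_count_succ leq_addr.
by rewrite vtm_count_succ -[(vtm_maxcount N).+1]addn1 leq_add ?leq_b1 // (leq_bigmax a).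
Qed.

Lemma vtm_maxcount_ge N : N <= 3 * vtm_maxcount N.
Proof.
apply: (@leq_trans (\sum_(a : 'I_3) vtm_maxcount N)).
  rewrite -{1}(size_mkseq vtm N) -sum_count_mem; apply: leq_sum => a _.
  exact: (@leq_bigmax _ (vtm_count^~ N) a).
by rewrite sum_nat_const card_ord.
Qed.

Lemma frequent_squarefree_word (x : 'I_3) N : exists w : seq 'I_3,
  [/\ squarefree w, size w = N & count_mem x w = vtm_maxcount N].
Proof.
have [s Es] := eq_bigmax (vtm_count^~ N) (ltac:(by rewrite card_ord)).
rewrite /vtm_maxcount Es.
exists (map (tperm s x) (mkseq vtm N)); split.
- by apply/squarefree_map/squarefree_mkseq/vtm_no_square; apply: perm_inj.
- by rewrite size_map size_mkseq.
- rewrite count_map; apply: eq_count => a /=.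
  by rewrite -[X in _ == X](tpermL s x) (inj_eq perm_inj).
Qed.

Lemma bracket_incr (g : nat -> nat) n : (forall N, g N < g N.+1) -> g 0 = 0 ->
  exists N, g N <= n < g N.+1.
Proof.
move=> incr g0; elim: n => [|n [N /andP [gN_le gN_gt]]].
  by exists 0; rewrite g0 (leq_ltn_trans _ (incr 0)) ?g0.
case: (ltnP n.+1 (g N.+1)) => gN1; first by exists N; rewrite gN1 andbT; lia.
by exists N.+1; have := incr N.+1; lia.
Qed.

Lemma f_4_ge_pow (x : 'I_3) (U : seq 'I_3) :
  U <> [::] -> head x U = x -> last x U = x ->
  forall n, exists v, n < (size U + 5) * v.+1 /\ r U ^ v <= f_k 4 n.
Proof.
move=> U_neq0 head_U last_U n.
have U_gt0 : 0 < size U by case: U U_neq0 {head_U last_U}.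
(* [g N] is the length of the word built from a square-free word of length N. *)
pose g N := 2 * N + (size U).-1 * vtm_maxcount N.
have g_incr N : g N < g N.+1.
  by have /andP [le_m _] := vtm_maxcount_succ N; rewrite /g; nia.
have g0 : g 0 = 0 by rewrite /g vtm_maxcount0 !muln0.
have [N /andP [gN_le gN_gt]] := bracket_incr n g_incr g0.
have [w [sqw sw cw]] := frequent_squarefree_word x N.
exists (vtm_maxcount N); split.
  have /andP [_ m_le] := vtm_maxcount_succ N; have := vtm_maxcount_ge N.
  by move: gN_gt; rewrite /g; nia.
rewrite -cw; apply: leq_trans (r_subst_ge U_neq0 head_U last_U sqw) (r_le_f_k _).
by rewrite size_subst // sw cw.
Qed.

Open Scope R_scope.

Lemma INR_expn (m k : nat) : INR (m ^ k) = INR m ^ k.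
Proof. by elim: k => // k IH; rewrite expnS mult_INR IH. Qed.

Lemma Rpower_inv_pow_le (a : R) (K v n : nat) :
  1 <= a -> (n < K * v.+1)%N -> Rpower a (/ INR K) ^ n <= a ^ v.+1.
Proof.
move=> a_ge1 nK; have K_gt0 : (0 < K)%N by case: K nK.
have a_gt0 : 0 < a by lra.
have root_gt0 : 0 < Rpower a (/ INR K) by apply: exp_pos.
rewrite -(Rpower_pow n _ root_gt0) Rpower_mult -(Rpower_pow v.+1 _ a_gt0).
apply: Rle_Rpower => //.
apply: (Rmult_le_reg_l (INR K)); first exact/lt_0_INR/ltP.
rewrite -Rmult_assoc Rinv_r ?Rmult_1_l; last by apply/not_0_INR; lia.
by rewrite -mult_INR; apply/le_INR/leP; lia.
Qed.

Theorem theorem2p9 (x : 'I_3) (U : seq 'I_3)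
  (hU : U <> [::]) (hhead : head x U = x) (hlast : last x U = x) :
  let alpha := Rpower (INR (Defs.r U)) (/ INR (size U + 5)%nat) in
  exists c : R, 0 < c /\ forall n : nat, c * alpha ^ n <= INR (f_k 4 n).
Proof.
move=> alpha; have r_ge1 : 1 <= INR (r U) by apply/(le_INR 1)/leP/r_gt0.
exists (/ INR (r U)); split; first by apply: Rinv_0_lt_compat; lra.
move=> n; have [v [nv rv]] := f_4_ge_pow hU hhead hlast n.
apply: (Rle_trans _ (/ INR (r U) * INR (r U) ^ v.+1)).
  apply/Rmult_le_compat_l/Rpower_inv_pow_le => //.
  by apply/Rlt_le/Rinv_0_lt_compat; lra.
rewrite /= -Rmult_assoc Rinv_l ?Rmult_1_l; last lra.
by rewrite -INR_expn; apply/le_INR/leP.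
Qed.
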